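(* Let $n\geqslant 2$ and let $\alpha\in\mathcal{POI}_n$ have rank $n-1$. Then $\alpha\in\mathcal{AO}_n$ if and only if $\mathrm{d}(\alpha)$ and $\mathrm{i}(\alpha)$ have the same parity.
   Context: Let $\Omega_n=\{1<2<\cdots<n\}$. $\mathcal{I}_n$ denotes the symmetric inverse monoid of all partial injective maps (partial permutations) of $\Omega_n$, with maps written on the right and composed left to right. For $\alpha\in\mathcal{I}_n$, $\mathrm{Dom}(\alpha)$ and $\mathrm{Im}(\alpha)$ are its domain and image and its rank is $|\mathrm{Im}(\alpha)|$. $\mathcal{AI}_n$ is the set of all $\alpha\in\mathcal{I}_n$ such that $\alpha=\sigma|_{\mathrm{Dom}(\alpha)}$ for some even permutation $\sigma$ of $\Omega_n$. $\mathcal{POI}_n$ is the set of order-preserving elements of $\mathcal{I}_n$ (i.e. $x\leqslant y$ implies $x\alpha\leqslant y\alpha$ for $x,y\in\mathrm{Dom}(\alpha)$), and $\mathcal{AO}_n=\mathcal{AI}_n\cap\mathcal{POI}_n$. For $\alpha\in\mathcal{I}_n$ of rank $n-1$, $\mathrm{d}(\alpha)$ is the unique element of $\Omega_n\setminus\mathrm{Dom}(\alpha)$ and $\mathrm{i}(\alpha)$ is the unique element of $\Omega_n\setminus\mathrm{Im}(\alpha)$. *)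

From mathcomp Require Import all_boot all_order all_fingroup.
Set Implicit Arguments. Unset Strict Implicit. Unset Printing Implicit Defensive.

(* Omega_n is modelled by 'I_n, element k standing for k+1; the order is the
   natural one.  A partial map of Omega_n is a finite function
   'I_n -> option 'I_n (None = undefined). *)
Definition partmap (n : nat) := {ffun 'I_n -> option 'I_n}.

Definition Dom n (a : partmap n) : {set 'I_n} := [set x | a x != None].
Definition Im n (a : partmap n) : {set 'I_n} := [set y | [exists x, a x == Some y]].

Definition is_pinj n (a : partmap n) : Prop :=
  forall x y z, a x = Some z -> a y = Some z -> x = y.

Definition prank n (a : partmap n) : nat := #|Im a|.

Definition in_AI n (a : partmap n) : Prop :=
  is_pinj a /\
  exists s : 'S_n, ~~ odd_perm s /\ forall x, x \in Dom a -> a x = Some (s x).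

Definition in_POI n (a : partmap n) : Prop :=
  is_pinj a /\
  forall x y u v, a x = Some u -> a y = Some v -> x <= y -> u <= v.

Definition in_AO n (a : partmap n) : Prop := in_AI a /\ in_POI a.

From mathcomp Require Import all_boot all_order all_fingroup.
From mathcomp Require Import zify.
Set Implicit Arguments. Unset Strict Implicit. Unset Printing Implicit Defensive.

(* A permutation s of 'I_n that is increasing off one point d has parity
   d + s d: precomposing with the adjacent transposition (d, d+1), or
   postcomposing with (s d, s d + 1), keeps s increasing off the moved point,
   flips the parity of s and of exactly one of d, s d, and finally reaches
   d = s d = n-1, where s must be the identity.  A rank n-1 order-preserving
   partial injection extends uniquely to a permutation, sending d(a) to i(a),
   which is increasing off d(a). *)

Lemma perm_increasing_eq1 n (s : {perm 'I_n}) :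
  {homo s : x y / x < y} -> s = 1%g.
Proof.
move=> s_incr.
have enum_sorted : sorted (relpre val ltn) (enum 'I_n).
  by rewrite -sorted_map val_enum_ord iota_ltn_sorted.
have map_s_enum : map s (enum 'I_n) = enum 'I_n.
  apply: (irr_sorted_eq (leT := relpre val ltn)) => //.
  - exact: (fun y x z => @ltn_trans (val y) (val x) (val z)).
  - by move=> x; exact: ltnn.
  - by apply: homo_sorted enum_sorted => x y; apply: s_incr.
  - move=> x; rewrite mem_enum; apply/mapP.
    by exists (s^-1 x)%g; rewrite ?mem_enum ?permKV.
apply/permP => x; rewrite perm1.
have x_lt : x < size (enum 'I_n) by rewrite size_enum_ord.
by rewrite -{1}(nth_ord_enum x x) -(nth_map x x s x_lt) map_s_enum nth_ord_enum.
Qed.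

Lemma tperm_succ_ltn n (k l u v : 'I_n) : l = k.+1 :> nat ->
  u < v -> ~~ ((u == k) && (v == l)) -> tperm k l u < tperm k l v.
Proof.
have tpermE x : tperm k l x = if x == k then l else if x == l then k else x.
  by case: tpermP => [->|->|/eqP/negPf-> /eqP/negPf->]; rewrite ?eqxx //; case: eqP => [->|].
rewrite !tpermE -!(inj_eq val_inj) /=.
by repeat case: eqP; lia.
Qed.

Lemma increasing_off_tpermL n (s : {perm 'I_n}) (d d' : 'I_n) :
  d' = d.+1 :> nat -> {in predC1 d &, {homo s : x y / x < y}} ->
  {in predC1 d' &, {homo (tperm d d' * s)%g : x y / x < y}}.
Proof.
move=> d_succ s_incr x y /[!inE] xd' yd' xy; rewrite !permM.
have tperm_neq z : z != d' -> tperm d d' z \in predC1 d.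
  by move=> zd'; rewrite inE -{2}(tpermR d d') (inj_eq perm_inj).
apply: s_incr; rewrite ?tperm_neq //.
by apply: tperm_succ_ltn; rewrite // (negPf yd') andbF.
Qed.

Lemma increasing_off_tpermR n (s : {perm 'I_n}) (d j : 'I_n) :
  j = (s d).+1 :> nat -> {in predC1 d &, {homo s : x y / x < y}} ->
  {in predC1 d &, {homo (s * tperm (s d) j)%g : x y / x < y}}.
Proof.
move=> j_succ s_incr x y xd yd xy; rewrite !permM.
apply: (tperm_succ_ltn j_succ (s_incr _ _ xd yd xy)).
by move: xd; rewrite inE (inj_eq perm_inj) => /negPf->.
Qed.

Lemma odd_perm_increasing_off_last n (s : {perm 'I_n}) (d : 'I_n) :
  d = n.-1 :> nat -> {in predC1 d &, {homo s : x y / x < y}} ->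
  odd_perm s = odd d (+) odd (s d).
Proof.
move=> d_last; have [k] := ubnP (n.-1 - s d).
elim: k s => // k IHk s dist s_incr.
case: (ltnP (s d) n.-1) => [sd_lt|sd_ge].
  have j_lt : (s d).+1 < n by have := ltn_ord (s d); lia.
  set j := Ordinal j_lt; have j_succ : j = (s d).+1 :> nat by [].
  have sd_neq : s d != j by apply/eqP => sdj; move: j_succ; rewrite -sdj; lia.
  have dist' : n.-1 - (s * tperm (s d) j)%g d < k by rewrite permM tpermL j_succ; lia.
  have := IHk _ dist' (increasing_off_tpermR j_succ s_incr).
  rewrite permM tpermL odd_permM odd_tperm sd_neq j_succ /= addbT addbN.
  exact: negb_inj.
suff -> : s = 1%g by rewrite odd_perm1 perm1 addbb.
apply: perm_increasing_eq1 => x y xy.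
have xd : x != d by apply: contraTneq xy => ->; have := ltn_ord y; lia.
have [yd|yd] := eqVneq y d; last by apply: s_incr; rewrite ?inE.
have : s x != s d by rewrite (inj_eq perm_inj).
by rewrite yd -(inj_eq val_inj) /=; have := ltn_ord (s x); lia.
Qed.

Lemma odd_perm_increasing_off n (s : {perm 'I_n}) (d : 'I_n) :
  {in predC1 d &, {homo s : x y / x < y}} -> odd_perm s = odd d (+) odd (s d).
Proof.
have [k] := ubnP (n.-1 - d); elim: k s d => // k IHk s d dist s_incr.
case: (ltnP d n.-1) => [d_lt|d_ge]; last first.
  by apply: odd_perm_increasing_off_last => //; have := ltn_ord d; lia.
have d'_lt : d.+1 < n by have := ltn_ord d; lia.
set d' := Ordinal d'_lt; have d_succ : d' = d.+1 :> nat by [].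
have d_neq : d != d' by apply/eqP => dd'; move: d_succ; rewrite -dd'; lia.
have dist' : n.-1 - d' < k by rewrite d_succ; lia.
have := IHk _ _ dist' (increasing_off_tpermL d_succ s_incr).
rewrite permM tpermR odd_permM odd_tperm d_neq d_succ /= addNb.
exact: negb_inj.
Qed.

Lemma POI_increasing_off n (a : partmap n) (s : {perm 'I_n}) (d : 'I_n) :
  in_POI a -> (forall x, x != d -> a x = Some (s x)) ->
  {in predC1 d &, {homo s : x y / x < y}}.
Proof.
move=> [a_inj a_mono] sa x y /[!inE] xd yd xy.
have ax := sa x xd; have ay := sa y yd.
rewrite ltn_neqAle (a_mono _ _ _ _ ax ay (ltnW xy)) andbT.
apply: contraTneq xy => /val_inj sxy.
by rewrite sxy in ax; rewrite (a_inj _ _ _ ax ay) ltnn.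
Qed.

Lemma card_Im_le_Dom n (a : partmap n) : #|Im a| <= #|Dom a|.
Proof.
rewrite -(card_imset _ (@Some_inj _)); apply: leq_trans (leq_imset_card a (Dom a)).
apply/subset_leq_card/subsetP => _ /imsetP [y /[!inE] /existsP [x /eqP ax] ->].
by rewrite -ax imset_f // inE ax.
Qed.

Lemma setC1_card_eq (T : finType) (A : {set T}) (x : T) :
  x \notin A -> #|T|.-1 <= #|A| -> A = [set~ x].
Proof.
move=> xA cardA; apply/eqP; rewrite eqEcard cardsC1 cardA andbT.
by apply/subsetP => y yA; rewrite !inE; apply: contraNneq xA => <-.
Qed.

Section PartialInjectionOfCorank1.

Variables (n : nat) (a : partmap n) (d i : 'I_n).
Hypotheses (Dom_a : Dom a = [set~ d]) (Im_a : Im a = [set~ i]).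

Lemma perm_extension_hole (s : {perm 'I_n}) :
  (forall x, x != d -> a x = Some (s x)) -> s d = i.
Proof.
move=> sa; apply/eqP; apply: contraT => sdi.
have : s d \in Im a by rewrite Im_a !inE.
rewrite inE => /existsP [x /eqP ax].
have xd : x != d by rewrite -in_setC1 -Dom_a inE ax.
by move: ax; rewrite sa // => -[/perm_inj xd']; rewrite xd' eqxx in xd.
Qed.

Lemma pinj_perm_extension : is_pinj a ->
  exists2 s : {perm 'I_n}, s d = i & forall x, x != d -> a x = Some (s x).
Proof.
move=> a_inj; pose f (x : 'I_n) := if x == d then i else odflt x (a x).
have af x : x != d -> a x = Some (f x).
  move=> xd; have : x \in Dom a by rewrite Dom_a !inE.
  by rewrite /f (negPf xd) inE; case: (a x).
have f_Im x : (f x \in Im a) = (x != d).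
  have [->|xd] := eqVneq x d; first by rewrite /f eqxx Im_a !inE eqxx.
  by rewrite inE; apply/existsP; exists x; rewrite af.
have f_inj : injective f.
  move=> x y fxy; have := f_Im y; rewrite -fxy f_Im.
  have [->|xd] := eqVneq x d; first by case: eqVneq.
  by move=> /esym yd; apply: (a_inj _ _ (f x)); [exact: af | rewrite fxy; exact: af].
exists (perm f_inj) => [|x xd]; first by rewrite permE /f eqxx.
by rewrite permE af.
Qed.

End PartialInjectionOfCorank1.

Theorem proposition1p1 (n : nat) (a : partmap n) (d i : 'I_n) :
  2 <= n -> in_POI a -> prank a = n.-1 ->
  d \notin Dom a -> i \notin Im a ->
  (in_AO a <-> odd d = odd i).
Proof.
move=> _ a_POI a_rank dDom iIm.
have Dom_a : Dom a = [set~ d].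
  by apply: (setC1_card_eq dDom); rewrite card_ord -a_rank; apply: card_Im_le_Dom.
have Im_a : Im a = [set~ i] by apply: (setC1_card_eq iIm); rewrite card_ord -a_rank.
have inDom x : (x \in Dom a) = (x != d) by rewrite Dom_a !inE.
have odd_ext (s : 'S_n) : (forall x, x != d -> a x = Some (s x)) ->
    odd_perm s = odd d (+) odd i.
  move=> sa; rewrite -(perm_extension_hole Dom_a Im_a sa).
  exact/odd_perm_increasing_off/(POI_increasing_off a_POI sa).
split=> [[[_ [s [s_even sa]]] _] | same_parity].
  have sa' x : x != d -> a x = Some (s x) by rewrite -inDom; apply: sa.
  by apply/eqP; rewrite -negb_add -(odd_ext s sa').
have [s _ sa] := pinj_perm_extension Dom_a Im_a a_POI.1.
split=> //; split; first exact: a_POI.1.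
exists s; split; first by rewrite odd_ext // same_parity addbb.
by move=> x; rewrite inDom; apply: sa.
Qed.
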